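(* Fix real numbers $\lambda>0$, $\mu>0$, $\Delta\ge 0$ and $T_{cl}>0$. Let $(N_k)_{k\ge1}$ be positive integers with $N_k\to\infty$, and let $m_k,c_k$ be positive integers with $m_kc_k=N_k$, $m_k\to\infty$ and $c_k\to\infty$. Define $$a_k=\lambda\Delta+\frac{\lambda}{m_k\mu},\qquad P_{b,k}=\frac{a_k^{c_k}/c_k!}{\sum_{j=0}^{c_k}a_k^{j}/j!},\qquad \mathbb{E}[T_{\text{sys},k}]=\Big(\Delta+\frac{1}{m_k\mu}\Big)(1-P_{b,k})+T_{cl}\,P_{b,k}.$$ Then $\lim_{k\to\infty}\mathbb{E}[T_{\text{sys},k}]=\Delta$.
   Context: Model: an edge system with $N$ workers is split into $c$ groups of $m$ workers ($N=mc$); jobs arrive as a Poisson process of rate $\lambda$, each job is replicated on the $m$ workers of a free group, and jobs finding all groups busy are blocked and sent to the cloud, where they take expected time $T_{cl}$. Worker service times are shifted exponential $\mathrm{SExp}(\Delta,\mu)$ ($\Delta$ plus an exponential of rate $\mu$), so the job-computing time has mean $\Delta+\frac{1}{m\mu}$. The blocking probability is the Erlang B formula with $c$ servers and offered load $\lambda(\Delta+\frac{1}{m\mu})$, and the average system time is $(1-P_b)\mathbb{E}[T_{\text{job}}]+P_b T_{cl}$. *)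

From Stdlib Require Import Arith Reals Lra Lia.
From Coquelicot Require Import Coquelicot.
Open Scope R_scope.

Definition erlangB (c : nat) (a : R) : R :=
  (a ^ c / INR (Factorial.fact c)) / sum_f_R0 (fun j => a ^ j / INR (Factorial.fact j)) c.

Definition offered_load (lambda mu Delta : R) (m : nat) : R :=
  lambda * Delta + lambda / (INR m * mu).

Definition avg_sys_time (lambda mu Delta Tcl : R) (m c : nat) : R :=
  let Pb := erlangB c (offered_load lambda mu Delta m) in
  (Delta + 1 / (INR m * mu)) * (1 - Pb) + Tcl * Pb.

(* The loads a_k = lambda Delta + lambda/(m_k mu) stay in [0, A] with A = lambda Delta + lambda/mu,
   since m_k >= 1. The Erlang B formula is at most a^c/c! (its denominator is at least 1), hence
   at most A^c/c!, which tends to 0 as c -> oo. So P_b -> 0 and the system time tends to the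
   limit of the computing time Delta + 1/(m mu), namely Delta as m -> oo. *)
From Stdlib Require Import Arith Reals Lra Lia.
From Coquelicot Require Import Coquelicot.
Open Scope R_scope.

Lemma INR_fact_pos (n : nat) : 0 < INR (Factorial.fact n).
Proof. apply lt_0_INR, lt_O_fact. Qed.

Lemma pow_div_fact_nonneg (a : R) (n : nat) : 0 <= a -> 0 <= a ^ n / INR (Factorial.fact n).
Proof.
  intros Ha. apply Rdiv_le_0_compat; [now apply pow_le | apply INR_fact_pos].
Qed.

Lemma exp_partial_sum_ge1 (a : R) (n : nat) :
  0 <= a -> 1 <= sum_f_R0 (fun j => a ^ j / INR (Factorial.fact j)) n.
Proof.
  intros Ha; induction n as [|n IH].
  - simpl; lra.
  - rewrite tech5. pose proof (pow_div_fact_nonneg a (S n) Ha); lra.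
Qed.

Lemma erlangB_nonneg (c : nat) (a : R) : 0 <= a -> 0 <= erlangB c a.
Proof.
  intros Ha. unfold erlangB.
  pose proof (exp_partial_sum_ge1 a c Ha).
  apply Rdiv_le_0_compat; [now apply pow_div_fact_nonneg | lra].
Qed.

Lemma erlangB_le_pow_div_fact (c : nat) (a A : R) :
  0 <= a <= A -> erlangB c a <= A ^ c / INR (Factorial.fact c).
Proof.
  intros Ha. unfold erlangB.
  pose proof (exp_partial_sum_ge1 a c (proj1 Ha)) as Hsum.
  pose proof (pow_div_fact_nonneg a c (proj1 Ha)) as Hnum.
  apply Rle_trans with (a ^ c / INR (Factorial.fact c)).
  - apply Rmult_le_reg_r with (sum_f_R0 (fun j => a ^ j / INR (Factorial.fact j)) c); [lra|].
    unfold Rdiv at 1. rewrite Rmult_assoc, Rinv_l by lra. nra.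
  - apply Rmult_le_compat_r.
    + apply Rlt_le, Rinv_0_lt_compat, INR_fact_pos.
    + apply pow_incr; lra.
Qed.

Lemma offered_load_bounds (lambda mu Delta : R) (m : nat) :
  0 < lambda -> 0 < mu -> 0 <= Delta -> (0 < m)%nat ->
  0 <= offered_load lambda mu Delta m <= lambda * Delta + lambda / mu.
Proof.
  intros Hlambda Hmu HDelta Hm. unfold offered_load.
  assert (Hm1 : 1 <= INR m) by (apply (le_INR 1); lia).
  assert (0 <= lambda * Delta) by (apply Rmult_le_pos; lra).
  assert (0 < lambda / (INR m * mu)) by (apply Rdiv_lt_0_compat; nra).
  assert (lambda / (INR m * mu) <= lambda / mu).
  { apply Rmult_le_compat_l; [lra|]. apply Rinv_le_contravar; nra. }
  lra.
Qed.

Lemma filterlim_of_INR_p_infty (c : nat -> nat) :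
  is_lim_seq (fun k => INR (c k)) p_infty -> filterlim c eventually eventually.
Proof.
  intros Hc P [M HM].
  destruct (proj2 (is_lim_seq_spec _ _) Hc (INR M)) as [K HK].
  exists K. intros n Hn. apply HM.
  apply Nat.lt_le_incl, INR_lt, HK, Hn.
Qed.

Lemma is_lim_seq_erlangB_0 (c : nat -> nat) (a : nat -> R) (A : R) :
  is_lim_seq (fun k => INR (c k)) p_infty -> (forall k, 0 <= a k <= A) ->
  is_lim_seq (fun k => erlangB (c k) (a k)) 0.
Proof.
  intros Hc Ha.
  apply is_lim_seq_le_le with (fun _ => 0) (fun k => A ^ c k / INR (Factorial.fact (c k))).
  - intro k. split; [apply erlangB_nonneg | apply erlangB_le_pow_div_fact]; apply Ha.
  - apply is_lim_seq_const.
  - apply (is_lim_seq_subseq (fun n => A ^ n / INR (Factorial.fact n)) 0 c).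
    + now apply filterlim_of_INR_p_infty.
    + apply is_lim_seq_Reals, cv_speed_pow_fact.
Qed.

Lemma is_lim_seq_inv_mul_p_infty (u : nat -> R) (mu : R) :
  is_lim_seq u p_infty -> is_lim_seq (fun k => 1 / (u k * mu)) 0.
Proof.
  intros Hu.
  apply is_lim_seq_ext with (fun k => / u k * / mu).
  { intro k. unfold Rdiv. now rewrite Rmult_1_l, Rinv_mult. }
  replace (Finite 0) with (Rbar_mult (Rbar_inv p_infty) (/ mu)) by (simpl; f_equal; ring).
  apply is_lim_seq_scal_r, is_lim_seq_inv; [exact Hu | discriminate].
Qed.

Theorem theorem3 (lambda mu Delta Tcl : R)
  (Hlambda : 0 < lambda) (Hmu : 0 < mu) (HDelta : 0 <= Delta) (HTcl : 0 < Tcl)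
  (N m c : nat -> nat)
  (HNpos : forall k, (0 < N k)%nat)
  (Hmpos : forall k, (0 < m k)%nat)
  (Hcpos : forall k, (0 < c k)%nat)
  (Hprod : forall k, (m k * c k)%nat = N k)
  (HNinf : is_lim_seq (fun k => INR (N k)) p_infty)
  (Hminf : is_lim_seq (fun k => INR (m k)) p_infty)
  (Hcinf : is_lim_seq (fun k => INR (c k)) p_infty) :
  is_lim_seq (fun k => avg_sys_time lambda mu Delta Tcl (m k) (c k)) Delta.
Proof.
  assert (HPb : is_lim_seq (fun k => erlangB (c k) (offered_load lambda mu Delta (m k))) 0).
  { apply (is_lim_seq_erlangB_0 c _ (lambda * Delta + lambda / mu) Hcinf).
    intro k. now apply offered_load_bounds. }
  pose proof (is_lim_seq_inv_mul_p_infty _ mu Hminf) as Hjob.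
  pose proof (is_lim_seq_plus' _ _ _ _
    (is_lim_seq_mult' _ _ _ _
      (is_lim_seq_plus' _ _ _ _ (is_lim_seq_const Delta) Hjob)
      (is_lim_seq_minus' _ _ _ _ (is_lim_seq_const 1) HPb))
    (is_lim_seq_mult' _ _ _ _ (is_lim_seq_const Tcl) HPb)) as Hlim.
  replace ((Delta + 0) * (1 - 0) + Tcl * 0) with Delta in Hlim by ring.
  exact Hlim.
Qed.
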